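(* Let $\mathcal{C}\subseteq\mathbb{F}^n$ be an $\mathbb{F}$-linear code of dimension $k$ and $\mathcal{L}\in\mathcal{P}(\mathbf{K}^{\mathbf{n}})$. Then $\mu_{\mathcal{C}}(\mathcal{L})+\rho_{\mathcal{C}}(\mathcal{L})=n-k$.
   Context: Setting: $\ell,n_1,\dots,n_\ell$ positive integers, $K_1,\dots,K_\ell$ finite fields with a common finite extension $\mathbb{F}$, $m_i=[\mathbb{F}:K_i]$, $n=\sum n_i$. $\mathcal{P}(\mathbf{K}^{\mathbf{n}})=\mathcal{P}(K_1^{n_1})\times\cdots\times\mathcal{P}(K_\ell^{n_\ell})$, $\mathcal{P}(K_i^{n_i})$ the lattice of $K_i$-subspaces of $K_i^{n_i}$, with componentwise inclusion and orthogonal complements (standard bilinear form). For $\mathbf{c}=(\mathbf{c}^{(1)},\dots,\mathbf{c}^{(\ell)})\in\mathbb{F}^n$, $\mathbf{c}^{(i)}\in\mathbb{F}^{n_i}$, let $\Gamma_i(\mathbf{c}^{(i)})$ be the $m_i\times n_i$ matrix over $K_i$ whose columns are the coordinate vectors of the entries of $\mathbf{c}^{(i)}$ w.r.t. a fixed basis of $\mathbb{F}/K_i$, and $\mathrm{supp}(\mathbf{c})=(E_1,\dots,E_\ell)$ with $E_i$ the row space of $\Gamma_i(\mathbf{c}^{(i)})$. $\mathcal{C}^\perp$ is the dual of $\mathcal{C}$ in $\mathbb{F}^n$. Define $\mathcal{C}(\mathcal{L})=\{\mathbf{c}\in\mathcal{C}^\perp:\mathrm{supp}(\mathbf{c})\subseteq\mathcal{L}^\perp\}$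 and $\mu_{\mathcal{C}}(\mathcal{L})=\dim_{\mathbb{F}}\mathcal{C}(\mathcal{L})$. For $\mathcal{L}=(\mathcal{L}_1,\dots,\mathcal{L}_\ell)$ with $N_i=\dim_{K_i}\mathcal{L}_i$, $N=\sum N_i$, let $\mathbf{A}_i$ be an $N_i\times n_i$ generator matrix of $\mathcal{L}_i$ over $K_i$, $\mathbf{A}=\mathrm{diag}(\mathbf{A}_1,\dots,\mathbf{A}_\ell)$, and $\Pi_{\mathcal{L}}:\mathbb{F}^n\to\mathbb{F}^N$, $\mathbf{x}\mapsto\mathbf{x}\mathbf{A}^T$. Define $\mathcal{C}_{\mathcal{L}}=\Pi_{\mathcal{L}}(\mathcal{C}^\perp)$ and $\rho_{\mathcal{C}}(\mathcal{L})=\dim_{\mathbb{F}}\mathcal{C}_{\mathcal{L}}$. *)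

From HB Require Import structures.
From mathcomp Require Import all_boot all_order all_algebra.
Set Implicit Arguments. Unset Strict Implicit. Unset Printing Implicit Defensive.
Import GRing.Theory.
Local Open Scope ring_scope.

(* Sum-rank setting: l blocks, block i of length n i over the finite field K i,
   embedded in the common finite extension F via sigma i.  Vectors of F^n are
   row vectors of length \sum_i n i; block i is obtained with submxrow. *)

Section SumRank.
Variables (F : finFieldType) (l : nat) (K : 'I_l -> finFieldType)
          (sigma : forall i, {rmorphism K i -> F})
          (m : 'I_l -> nat) (b : forall i, 'rV[F]_(m i)).

Definition is_basis_over (i : 'I_l) : Prop :=
  forall x : F, exists! g : 'rV[K i]_(m i),
    x = \sum_(j < m i) sigma i (g 0 j) * b i 0 j.

Definition coordv (i : 'I_l) (x : F) : 'rV[K i]_(m i) :=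
  odflt 0 [pick g : 'rV[K i]_(m i) | x == \sum_(j < m i) sigma i (g 0 j) * b i 0 j].

Definition Gamma (i : 'I_l) (ni : nat) (c : 'rV[F]_ni) : 'M[K i]_(m i, ni) :=
  \matrix_(j < m i, t < ni) coordv i (c 0 t) 0 j.

Arguments Gamma i {ni} c.
Arguments coordv i x.

Variable (n : 'I_l -> nat).
Notation N := (\sum_(i < l) n i)%N.

Definition blk (c : 'rV[F]_N) (i : 'I_l) : 'rV[F]_(n i) := @submxrow F l n 1 c i.

(* orthogonal complement (standard bilinear form) of the row space of M *)
Definition perpmx (R : fieldType) (p q : nat) (M : 'M[R]_(p, q)) := kermx M^T.

(* supp(c) = (E_1,...,E_l), E_i = row space of Gamma_i(c^(i));
   supp(c) \subseteq L^perp componentwise, L_i = row space of L i *)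
Definition supp_sub_perp (c : 'rV[F]_N) (Lq : 'I_l -> nat)
  (L : forall i, 'M[K i]_(Lq i, n i)) : bool :=
  [forall i : 'I_l, (Gamma i (blk c i) <= perpmx (L i))%MS].

(* The dual code of the code C (= row space of C) *)
Definition dualcode (r : nat) (C : 'M[F]_(r, N)) : {set 'rV[F]_N} :=
  [set x : 'rV[F]_N | (x <= perpmx C)%MS].

Definition CL (r : nat) (C : 'M[F]_(r, N)) (Lq : 'I_l -> nat)
  (L : forall i, 'M[K i]_(Lq i, n i)) : {set 'rV[F]_N} :=
  [set c in dualcode C | supp_sub_perp c L].

Definition dimF (q : nat) (S : {set 'rV[F]_q}) : nat :=
  \rank (\sum_(c in S) <<c>>)%MS.

Definition mu (r : nat) (C : 'M[F]_(r, N)) (Lq : 'I_l -> nat)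
  (L : forall i, 'M[K i]_(Lq i, n i)) : nat := dimF (CL C L).

(* Pi_L(x) = x A^T with A = diag(A_1,...,A_l) (A_i mapped into F),
   computed blockwise. *)
Definition PiL (Nq : 'I_l -> nat) (A : forall i, 'M[K i]_(Nq i, n i))
  (x : 'rV[F]_N) : 'rV[F]_(\sum_(i < l) Nq i) :=
  \mxrow_(i < l) (blk x i *m (map_mx (sigma i) (A i))^T).

Definition rho (r : nat) (C : 'M[F]_(r, N)) (Nq : 'I_l -> nat)
  (A : forall i, 'M[K i]_(Nq i, n i)) : nat :=
  dimF [set PiL A x | x in dualcode C].

End SumRank.

(* Pi_L is right multiplication by a fixed matrix P over F.  Since the basis
   of F over K_i is linearly independent, the support condition
   supp(c) <= L^perp says exactly that Pi_L(c) = 0.  Hence C(L) is the kernel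
   of Pi_L restricted to the dual code C^perp and C_L is its image, so
   rank-nullity on C^perp, of dimension n - k, gives mu + rho = n - k. *)
From HB Require Import structures.
From mathcomp Require Import all_boot all_order all_algebra.
Set Implicit Arguments. Unset Strict Implicit. Unset Printing Implicit Defensive.
Import GRing.Theory.
Local Open Scope ring_scope.

Lemma dimF_eq_rank (F : finFieldType) (q : nat) (S : {set 'rV[F]_q})
    (p : nat) (M : 'M[F]_(p, q)) :
  (forall c, c \in S -> (c <= M)%MS) -> (forall i, row i M \in S) ->
  dimF S = \rank M.
Proof.
move=> sSM sMS; apply: eqmx_rank; apply/andP; split.
  by apply/sumsmx_subP => c Sc; rewrite genmxE sSM.
apply/row_subP => i; apply: (sumsmx_sup (row i M)) => //.
by rewrite genmxE.
Qed.

Lemma sub_perpmxC (R : fieldType) (p q r : nat)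
    (X : 'M[R]_(p, r)) (Y : 'M[R]_(q, r)) :
  (X <= perpmx Y)%MS = (Y <= perpmx X)%MS.
Proof.
by rewrite !sub_kermx -[Y *m X^T]trmxK trmx_mul trmxK trmx_eq0.
Qed.

Lemma mxrow_eq0 (V : nmodType) (q r : nat) (q_ : 'I_q -> nat)
    (B_ : forall j, 'M[V]_(r, q_ j)) :
  (\mxrow_j B_ j == 0) = [forall j, B_ j == 0].
Proof.
apply/eqP/forallP => [B0 j | B0]; last first.
  by rewrite -mxrow0; apply: eq_mxrow => j; apply/eqP.
by apply/eqP; move/eq_mxrowP: (etrans B0 (esym (mxrow0 _))); apply.
Qed.

Section SumRankSupport.
Variables (F : finFieldType) (l : nat) (K : 'I_l -> finFieldType)
          (sigma : forall i, {rmorphism K i -> F})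
          (m : 'I_l -> nat) (b : forall i, 'rV[F]_(m i)).
Hypothesis hb : forall i, is_basis_over sigma b i.

Lemma coordvP (i : 'I_l) (x : F) :
  x = \sum_(j < m i) sigma i (coordv sigma b i x 0 j) * b i 0 j.
Proof.
rewrite /coordv; case: pickP => [g /eqP // | no_g].
have [g [xE _]] := hb i x.
by have := no_g g; rewrite /= -xE eqxx.
Qed.

Lemma mul_basis_Gamma (i : 'I_l) (q : nat) (c : 'rV[F]_q) :
  b i *m map_mx (sigma i) (Gamma sigma b i c) = c.
Proof.
apply/matrixP => u t; rewrite (ord1 u) [RHS](coordvP i) !mxE.
by apply: eq_bigr => j _; rewrite !mxE mulrC.
Qed.

Lemma mul_basis_map_eq0 (i : 'I_l) (q : nat) (H : 'M[K i]_(m i, q)) :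
  (b i *m map_mx (sigma i) H == 0) = (H == 0).
Proof.
apply/eqP/eqP => [bH0 | ->]; last by rewrite map_mx0 mulmx0.
apply/matrixP => j s; have [g [_ coord_uniq]] := hb i 0.
have bH0s : \sum_(j' < m i) b i 0 j' * sigma i (H j' s) = 0.
  have /matrixP/(_ 0 s) := bH0; rewrite !mxE => entry_s.
  by rewrite -[RHS]entry_s; apply: eq_bigr => j' _; rewrite mxE.
suff /matrixP/(_ 0 j) : \row_j H j s = 0 by rewrite !mxE.
rewrite -(coord_uniq (\row_j H j s)) ?(coord_uniq 0) //.
  by rewrite big1 // => j' _; rewrite mxE rmorph0 mul0r.
rewrite -[in LHS]bH0s.
by apply: eq_bigr => j' _; rewrite mxE mulrC.
Qed.

Variable n : 'I_l -> nat.
Notation N := (\sum_(i < l) n i)%N.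

Lemma blkE (x : 'rV[F]_N) (i : 'I_l) :
  blk x i = x *m submxrow (1%:M : 'M[F]_N) i.
Proof. by rewrite /blk mul_submxrow mulmx1. Qed.

Definition PiL_mx (Nq : 'I_l -> nat) (A : forall i, 'M[K i]_(Nq i, n i)) :
    'M[F]_(N, \sum_(i < l) Nq i) :=
  \mxrow_(i < l) (submxrow (1%:M : 'M[F]_N) i *m (map_mx (sigma i) (A i))^T).

Lemma PiL_mulmx (Nq : 'I_l -> nat) (A : forall i, 'M[K i]_(Nq i, n i))
    (x : 'rV[F]_N) :
  PiL sigma A x = x *m PiL_mx A.
Proof.
by rewrite /PiL /PiL_mx mul_mxrow; apply: eq_mxrow => i; rewrite blkE mulmxA.
Qed.

Lemma supp_sub_perp_PiL (Lq Nq : 'I_l -> nat)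
    (L : forall i, 'M[K i]_(Lq i, n i)) (A : forall i, 'M[K i]_(Nq i, n i)) :
    (forall i, (A i :=: L i)%MS) ->
  forall x : 'rV[F]_N, supp_sub_perp sigma b x L = (PiL sigma A x == 0).
Proof.
move=> eqAL x; rewrite /PiL mxrow_eq0; apply: eq_forallb => i.
rewrite sub_perpmxC -eqAL -sub_perpmxC sub_kermx.
rewrite -[in RHS](mul_basis_Gamma i (blk x i)) -mulmxA.
by rewrite map_trmx -map_mxM mul_basis_map_eq0.
Qed.

Lemma mu_rank (r : nat) (C : 'M[F]_(r, N)) (Lq Nq : 'I_l -> nat)
    (L : forall i, 'M[K i]_(Lq i, n i)) (A : forall i, 'M[K i]_(Nq i, n i)) :
    (forall i, (A i :=: L i)%MS) ->
  mu sigma b C L = \rank (perpmx C :&: kermx (PiL_mx A))%MS.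
Proof.
move=> eqAL; have suppE := supp_sub_perp_PiL eqAL.
apply: dimF_eq_rank => [c | j].
  by rewrite !inE suppE PiL_mulmx sub_capmx sub_kermx.
have := row_sub j (perpmx C :&: kermx (PiL_mx A))%MS.
by rewrite sub_capmx sub_kermx !inE suppE PiL_mulmx.
Qed.

Lemma rho_rank (r : nat) (C : 'M[F]_(r, N)) (Nq : 'I_l -> nat)
    (A : forall i, 'M[K i]_(Nq i, n i)) :
  rho sigma C A = \rank (perpmx C *m PiL_mx A).
Proof.
apply: dimF_eq_rank => [c /imsetP[x] | j].
  by rewrite inE => xC ->; rewrite PiL_mulmx submxMr.
by rewrite row_mul -PiL_mulmx imset_f // inE row_sub.
Qed.

End SumRankSupport.

Theorem mainTheorem4
  (F : finFieldType) (l : nat) (K : 'I_l -> finFieldType)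
  (sigma : forall i, {rmorphism K i -> F})
  (m : 'I_l -> nat) (b : forall i, 'rV[F]_(m i))
  (hb : forall i, is_basis_over sigma b i)
  (n : 'I_l -> nat) (hl : (0 < l)%N) (hn : forall i, (0 < n i)%N)
  (k r : nat) (C : 'M[F]_(r, \sum_(i < l) n i)) (hk : \rank C = k)
  (Lq : 'I_l -> nat) (L : forall i, 'M[K i]_(Lq i, n i))
  (Nq : 'I_l -> nat) (A : forall i, 'M[K i]_(Nq i, n i))
  (hA : forall i, row_free (A i) /\ (A i :=: L i)%MS) :
  (mu sigma b C L + rho sigma C A = (\sum_(i < l) n i) - k)%N.
Proof.
have eqAL i : (A i :=: L i)%MS by case: (hA i).
rewrite (mu_rank hb C eqAL) rho_rank addnC mxrank_mul_ker.
by rewrite /perpmx mxrank_ker mxrank_tr hk.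
Qed.
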